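(* In the setting below, the map $\bar{\phi}\colon D(\mathcal{A})/D(\mathcal{A}')\to D(\widetilde{\mathcal{A}''})$ is a quasi-isomorphism: it commutes with the differentials, lowers degrees by $2\operatorname{codim}x_0-1$, and induces an isomorphism in cohomology.
   Context: A complex subspace arrangement in $\mathbb{C}^l$ is a finite set of complex linear subspaces of $\mathbb{C}^l$ with no two distinct members $x\subset y$. For a finite set $\mathcal{C}$ of linear subspaces of a complex vector space $W$ with a linear order, $D(\mathcal{C})$ is the cochain complex over $\mathbb{Q}$ with basis all subsets $\sigma\subseteq\mathcal{C}$, where with $\vee\sigma=\bigcap_{x\in\sigma}x$ ($\vee\emptyset=W$), $\deg\sigma=2\operatorname{codim}_W(\vee\sigma)-|\sigma|$ and for $\sigma=\{x_{i_1},\dots,x_{i_r}\}$ in increasing order, $d\sigma=\sum_{j:\vee(\sigma\setminus\{x_{i_j}\})=\vee\sigma}(-1)^j(\sigma\setminus\{x_{i_j}\})$. Setting: $\mathcal{A}=\{x_0,\dots,x_n\}$ is a complex subspace arrangement in $\mathbb{C}^l$, $\mathcal{A}'=\mathcal{A}\setminus\{x_0\}$; on $\mathcal{A}'$, $y\sim z$ iff $x_0\cap y=x_0\cap z$, with classes $\mathcal{A}_1,\dots,\mathcal{A}_r$; the linear order is $x_0<x_1<\dots<x_n$ with elements of $\mathcal{A}_i$ preceding elements of $\mathcal{A}_j$ whenever $i<j$. $D(\mathcal{A}')$ is the subcomplex of $D(\mathcal{A})$ spanned by subsets not containing $x_0$. $\widetilde{\mathcal{A}''}=\{x_0\cap y\mid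 y\in\mathcal{A}'\}$, ordered by the order of the corresponding classes, and $D(\widetilde{\mathcal{A}''})$ is formed with ambient space $W=x_0$ (codimensions taken in $x_0$). $E=\{(y,z)\in\mathcal{A}'\times\mathcal{A}'\mid y\sim z,\ y\ne z\}$. The linear map $\phi\colon D(\mathcal{A})\to D(\widetilde{\mathcal{A}''})$ is: $\phi(\sigma)=0$ if $x_0\notin\sigma$ or if $x_0\in\sigma$ and $\{y,z\}\subseteq\sigma$ for some $(y,z)\in E$; otherwise, for $\sigma=\{x_0,x_{i_1},\dots,x_{i_r}\}$, $\phi(\sigma)=(-1)^r\{x_0\cap x_{i_1},\dots,x_0\cap x_{i_r}\}$. It vanishes on $D(\mathcal{A}')$ and $\bar\phi$ is the induced map on $D(\mathcal{A})/D(\mathcal{A}')$. $\operatorname{codim}x_0$ is the complex codimension of $x_0$ in $\mathbb{C}^l$. *)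

From mathcomp Require Import all_boot all_algebra.
From mathcomp Require Import Rstruct complex.

Set Implicit Arguments.
Unset Strict Implicit.
Unset Printing Implicit Defensive.
Import GRing.Theory.
Local Open Scope ring_scope.

Definition CC : fieldType := Rdefinitions.R[i].

Notation subspace l := {vspace 'rV[CC]_l}.

(** A finite family of subspaces indexed by 'I_m (the linear order is the
    order of the indices); the cochain complex D(C) over Q has basis the
    subsets of the index set, so a cochain is a rational-valued function on
    subsets. *)
Definition Dcx (m : nat) := {ffun {set 'I_m} -> rat}.

Definition vee l m (W : subspace l) (f : 'I_m -> subspace l) (s : {set 'I_m})
  : subspace l := (W :&: \bigcap_(i in s) f i)%VS.

Definition codimIn l (W U : subspace l) : nat := (\dim W - \dim U)%N.

Definition deg l m (W : subspace l) (f : 'I_m -> subspace l) (s : {set 'I_m})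
  : int := (2 * codimIn W (vee W f s))%:Z - (#|s|)%:Z.

(** position (1-based) of x in sigma listed increasingly *)
Definition pos m (x : 'I_m) (s : {set 'I_m}) : nat := #|[set y in s | (y <= x)%N]|.

Definition dD l m (W : subspace l) (f : 'I_m -> subspace l) (v : Dcx m) : Dcx m :=
  [ffun t => \sum_(s : {set 'I_m})
     v s * \sum_(x in s | (t == s :\ x) && (vee W f (s :\ x) == vee W f s))
             (-1) ^+ pos x s].

Definition homog l m (W : subspace l) (f : 'I_m -> subspace l) (k : int) (v : Dcx m)
  : Prop := forall s : {set 'I_m}, v s != 0 -> deg W f s = k.

(** v lies in the subcomplex D(A') (spanned by subsets not containing x_0) *)
Definition inDA' n (v : Dcx n.+1) : Prop := forall s : {set 'I_n.+1}, ord0 \in s -> v s = 0.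

Definition hasE l n (A : 'I_n.+1 -> subspace l) (s : {set 'I_n.+1}) : bool :=
  [exists i in s, exists j in s,
     [&& i != ord0, j != ord0, i != j & (A ord0 :&: A i == A ord0 :&: A j)%VS]].

(** The map phi : D(A) -> D(~A''), where the member x_0 /\ y of ~A'' is
    indexed by the class number c y of y. *)
Definition phi l n r (A : 'I_n.+1 -> subspace l) (c : 'I_n.+1 -> 'I_r)
  (v : Dcx n.+1) : Dcx r :=
  [ffun t => \sum_(s : {set 'I_n.+1})
     v s * (if (ord0 \in s) && ~~ hasE A s
            then (-1) ^+ (#|s| - 1) * (t == c @: (s :\ ord0))%:R
            else 0)].

(* A cochain of D(A)/D(A') is a cochain of D(A) on the sets s containing x_0, and
   phi(s) is, up to sign, the set of classes met by s \ x_0 (zero if s meets a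
   class twice).  Fixing a representative of each class gives a section psi of
   phi, a chain map because the representatives are ordered like their classes.
   For each class k, adding its representative to s is a homotopy between the
   identity and the map P_k that replaces the k-part of s by the representative
   when it is a single element and kills s otherwise; the signs work out because
   each class is an interval of the order.  Applying P_0, ..., P_(r-1) moves every
   cochain, up to a coboundary, onto the image of psi \o phi, which makes phi a
   chain map and an isomorphism in cohomology. *)

From mathcomp Require Import all_boot all_algebra.
From mathcomp Require Import Rstruct complex.
From mathcomp Require Import zify ring.
Set Implicit Arguments.
Unset Strict Implicit.
Unset Printing Implicit Defensive.
Import GRing.Theory.
Local Open Scope ring_scope.

Lemma ffunDE (aT : finType) (R : zmodType) (u v : {ffun aT -> R}) x :
  (u + v) x = u x + v x.
Proof. by rewrite ffunE. Qed.

Lemma ffunBE (aT : finType) (R : zmodType) (u v : {ffun aT -> R}) x :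
  (u - v) x = u x - v x.
Proof. by rewrite !ffunE. Qed.

Lemma sum_neq0 (R : nmodType) (I : finType) (P : pred I) (f : I -> R) :
  \sum_(i | P i) f i != 0 -> exists2 i, P i & f i != 0.
Proof.
move=> nz; case: (pickP [pred i | P i && (f i != 0)]) => [i /andP [] | none].
  by exists i.
move: nz; rewrite big1 ?eqxx // => i Pi.
by move: (none i); rewrite /= Pi => /negbFE /eqP.
Qed.

Section LinearExtension.
Variables m p : nat.
Implicit Types (s : {set 'I_m}) (t : {set 'I_p}) (u v : Dcx m) (F G : {set 'I_m} -> Dcx p).

Definition delta s : Dcx m := [ffun t => (t == s)%:R].

Definition linext F v : Dcx p := [ffun t => \sum_s v s * F s t].

Lemma linextD F u v : linext F (u + v) = linext F u + linext F v.
Proof.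
apply/ffunP=> t; rewrite !ffunE -big_split /=.
by apply: eq_bigr => s _; rewrite ffunE mulrDl.
Qed.

Lemma linext0 F : linext F 0 = 0.
Proof. by apply/ffunP=> t; rewrite !ffunE big1 // => s _; rewrite ffunE mul0r. Qed.

Lemma linextN F v : linext F (- v) = - linext F v.
Proof.
apply/ffunP=> t; rewrite !ffunE -sumrN.
by apply: eq_bigr => s _; rewrite ffunE mulNr.
Qed.

Lemma linextB F u v : linext F (u - v) = linext F u - linext F v.
Proof. by rewrite linextD linextN. Qed.

Lemma linext_delta F s : linext F (delta s) = F s.
Proof.
apply/ffunP=> t; rewrite ffunE (bigD1 s) //= big1 ?addr0 => [|s' /negPf ne].
  by rewrite ffunE eqxx mul1r.
by rewrite ffunE ne mul0r.
Qed.

Lemma eq_linext F G v : (forall s, v s != 0 -> F s = G s) -> linext F v = linext G v.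
Proof.
move=> eqFG; apply/ffunP=> t; rewrite !ffunE; apply: eq_bigr => s _.
by have [->|/eqFG ->] := eqVneq (v s) 0; rewrite ?mul0r.
Qed.

Lemma linext_addF F G v :
  linext (fun s => F s + G s) v = linext F v + linext G v.
Proof.
apply/ffunP=> t; rewrite !ffunE -big_split.
by apply: eq_bigr => s _; rewrite ffunE mulrDr.
Qed.

Lemma linext_subF F G v :
  linext (fun s => F s - G s) v = linext F v - linext G v.
Proof.
apply/ffunP=> t; rewrite ffunBE !ffunE -sumrB.
by apply: eq_bigr => s _; rewrite ffunBE mulrBr.
Qed.

Lemma linext_support F v t :
  linext F v t != 0 -> exists2 s, v s != 0 & F s t != 0.
Proof.
rewrite ffunE => /sum_neq0 [s _ nz]; exists s.
  by apply: contraNneq nz => ->; rewrite mul0r.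
by apply: contraNneq nz => ->; rewrite mulr0.
Qed.

Lemma linext_sum_delta F (I : finType) (P : pred I) (a : I -> rat)
    (f : I -> {set 'I_m}) t :
  linext F [ffun s => \sum_(i | P i) a i * (s == f i)%:R] t
  = \sum_(i | P i) a i * F (f i) t.
Proof.
rewrite ffunE; under eq_bigr do rewrite ffunE big_distrl.
rewrite exchange_big /=; apply: eq_bigr => i _.
rewrite (bigD1 (f i)) //= eqxx mulr1 big1 ?addr0 // => s /negPf ->.
by rewrite mulr0 mul0r.
Qed.

Lemma linext_scale_delta F (a : rat) s0 t :
  linext F [ffun s => a * (s == s0)%:R] t = a * F s0 t.
Proof.
rewrite ffunE (bigD1 s0) //= ffunE eqxx mulr1 big1 ?addr0 // => s /negPf ne.
by rewrite ffunE ne mulr0 mul0r.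
Qed.

End LinearExtension.

Lemma linext_deltaE m (v : Dcx m) : linext (@delta m) v = v.
Proof.
apply/ffunP=> t; rewrite ffunE (bigD1 t) //= ffunE eqxx mulr1 big1 ?addr0 //.
by move=> s /negPf ne; rewrite ffunE eq_sym ne mulr0.
Qed.

Lemma linext_comp m p q (G : {set 'I_p} -> Dcx q) (F : {set 'I_m} -> Dcx p) v :
  linext G (linext F v) = linext (fun s => linext G (F s)) v.
Proof.
apply/ffunP=> t; rewrite !ffunE.
under eq_bigr => u _ do rewrite ffunE big_distrl /=.
rewrite exchange_big /=; apply: eq_bigr => s _; rewrite ffunE big_distrr /=.
by apply: eq_bigr => u _; rewrite mulrA.
Qed.

Section Homogeneity.
Variables (m : nat) (dg : {set 'I_m} -> int).

Definition homogeneous (k : int) (v : Dcx m) := forall s, v s != 0 -> dg s = k.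

Lemma homogeneous0 k : homogeneous k 0.
Proof. by move=> s; rewrite ffunE eqxx. Qed.

Lemma homogeneousD k u v :
  homogeneous k u -> homogeneous k v -> homogeneous k (u + v).
Proof.
move=> hu hv s; rewrite ffunE; have [u0|/hu //] := eqVneq (u s) 0.
by rewrite u0 add0r => /hv.
Qed.

Lemma homogeneousN k v : homogeneous k v -> homogeneous k (- v).
Proof. by move=> hv s; rewrite ffunE oppr_eq0 => /hv. Qed.

End Homogeneity.

Lemma homogeneous_linext m p (dg : {set 'I_m} -> int) (dg' : {set 'I_p} -> int)
    (d k : int) (F : {set 'I_m} -> Dcx p) (v : Dcx m) :
  (forall s t, F s t != 0 -> dg' t = dg s + d) ->
  homogeneous dg k v -> homogeneous dg' (k + d) (linext F v).
Proof. by move=> hF hv t /linext_support [s /hv <- /hF]. Qed.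

Lemma signr_sqr (R : pzRingType) (a : nat) : (-1) ^+ a * (-1) ^+ a = 1 :> R.
Proof. by rewrite -expr2 sqrr_sign. Qed.

Lemma sum_setD1 (R : nmodType) (T : finType) (s : {set T}) x (f : T -> R) :
  \sum_(y in s :\ x) f y = \sum_(y in s) (if y != x then f y else 0).
Proof.
rewrite [RHS]big_mkcond [LHS]big_mkcond; apply: eq_bigr => y _.
by rewrite !inE; case: (y \in s); case: (y != x).
Qed.

Lemma sum_antisym (T : finType) (s : {set T}) (a : T -> T -> rat) :
  (forall x y, x \in s -> y \in s -> a y x = - a x y) ->
  \sum_(x in s) \sum_(y in s) a x y = 0.
Proof.
move=> antisym; set S := (X in X = 0).
have SN : S = - S.
  rewrite {1}/S exchange_big /= -sumrN; apply: eq_bigr => y ys.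
  by rewrite -sumrN; apply: eq_bigr => x xs; apply: antisym.
have : 2%:R * S = 0 by rewrite mulr_natl mulr2n {1}SN addNr.
by move/eqP; rewrite mulf_eq0 => /orP [//|/eqP].
Qed.

Lemma setD1C (T : finType) (s : {set T}) x y : s :\ x :\ y = s :\ y :\ x.
Proof. by apply/setP=> z; rewrite !inE andbCA. Qed.

Lemma setU1D1 (T : finType) (s : {set T}) a x : a != x -> (a |: s) :\ x = a |: (s :\ x).
Proof.
move=> ax; apply/setP=> z; rewrite !inE; case: (eqVneq z x) => [->|] //=.
by rewrite eq_sym (negPf ax).
Qed.

Lemma subv_ext l (X Y : subspace l) : (forall U, (U <= X)%VS = (U <= Y)%VS) -> X = Y.
Proof. by move=> eqXY; apply/subv_anti; rewrite -eqXY subvv eqXY subvv. Qed.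

Section Meets.
Variables (l m : nat) (W : subspace l) (f : 'I_m -> subspace l).

Lemma subv_vee U (s : {set 'I_m}) :
  (U <= vee W f s)%VS = (U <= W)%VS && [forall i in s, (U <= f i)%VS].
Proof.
rewrite /vee subv_cap; congr (_ && _).
by apply/subv_bigcapP/forall_inP => sUf i si; apply: sUf.
Qed.

Lemma veeS (s s' : {set 'I_m}) : s \subset s' -> (vee W f s' <= vee W f s)%VS.
Proof.
move=> ss'; have := subvv (vee W f s'); rewrite !subv_vee => /andP [-> /forall_inP sf].
by apply/forall_inP => i si; apply/sf/(subsetP ss').
Qed.

End Meets.

Section Positions.
Variable m : nat.
Implicit Types (a b x : 'I_m) (s : {set 'I_m}).

Lemma posU1 x a s : a \notin s -> pos x (a |: s) = (pos x s + (a <= x))%N.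
Proof.
move=> as_; rewrite /pos; case: (leqP a x) => hax /=.
  have -> : [set y in a |: s | (y <= x)%N] = a |: [set y in s | (y <= x)%N].
    by apply/setP=> y; rewrite !inE; case: (eqVneq y a) => [->|] //=; rewrite hax.
  have hn : a \notin [set y in s | (y <= x)%N] by rewrite inE negb_and as_.
  by rewrite cardsU1 hn /= addnC addn1.
have -> : [set y in a |: s | (y <= x)%N] = [set y in s | (y <= x)%N].
  apply/setP=> y; rewrite !inE; case: (eqVneq y a) => [->|] //=.
  by rewrite leqNgt hax ?andbF.
by rewrite addn0.
Qed.

Lemma posD1 x a s : a \in s -> pos x s = (pos x (s :\ a) + (a <= x))%N.
Proof. by move=> as_; rewrite -{1}(setD1K as_) posU1 // setD11. Qed.

Lemma pos_next a b s : a \in s -> b \in s -> (a < b)%N ->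
  (forall z, z \in s -> (a < z < b)%N -> False) -> pos b s = (pos a s).+1.
Proof.
move=> as_ bs ab between; rewrite /pos.
have -> : [set y in s | (y <= b)%N] = b |: [set y in s | (y <= a)%N].
  apply/setP=> y; rewrite !inE; case: (eqVneq y b) => [->|yb] /=; first by rewrite bs leqnn.
  case ys: (y \in s) => //=; case: (leqP y a) => ya; first by rewrite (leq_trans ya (ltnW ab)).
  case: (ltngtP y b) => // [lt_yb | eq_yb]; first by case: (between y ys); rewrite ya lt_yb.
  by move: yb; rewrite (val_inj eq_yb) eqxx.
by rewrite cardsU1 inE leqNgt ab andbF /= add1n.
Qed.

Lemma sign_swap a x s : a \notin s -> x \in s ->
  (-1) ^+ pos a (a |: s) * (-1) ^+ pos x (a |: s) =
  - ((-1) ^+ pos x s * (-1) ^+ pos a (a |: (s :\ x))) :> rat.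
Proof.
move=> as_ xs; have ax : a != x by apply: contraNneq as_ => ->.
rewrite (posU1 x as_) (posD1 a (setU1r a xs)) setU1D1 // !exprD.
case: (ltngtP x a) => [_|_|eq_xa].
- by rewrite /= expr1 expr0; ring.
- by rewrite /= expr1 expr0; ring.
- by move: ax; rewrite (val_inj eq_xa) eqxx.
Qed.

Lemma sign_adjacent a b s : a \in s -> b \in s -> a != b ->
  (forall z, z \in s -> ~~ (a < z < b)%N && ~~ (b < z < a)%N) ->
  (-1) ^+ pos a s * (-1) ^+ pos b s = -1 :> rat.
Proof.
wlog lt_ab : a b / (a < b)%N => [sym as_ bs ab gap | as_ bs _ gap].
  have [lt | lt | /val_inj eq] := ltngtP a b; last by rewrite eq eqxx in ab.
    exact: sym.
  by rewrite mulrC; apply: sym; rewrite // 1?eq_sym // => z /gap; rewrite andbC.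
rewrite (pos_next as_ bs lt_ab) => [|z zs zab]; first by rewrite exprS mulrCA signr_sqr mulr1.
by have := gap z zs; rewrite zab.
Qed.

End Positions.

Section Deletion.
Variables (l n r : nat) (A : 'I_n.+1 -> subspace l) (c : 'I_n.+1 -> 'I_r).
Hypothesis hc : forall i j : 'I_n.+1, i != ord0 -> j != ord0 ->
  (c i == c j) = (A ord0 :&: A i == A ord0 :&: A j)%VS.
Hypothesis hc_surj : forall k : 'I_r, exists2 i : 'I_n.+1, i != ord0 & c i = k.
Hypothesis hc_order : forall i j : 'I_n.+1, i != ord0 -> j != ord0 ->
  (c i < c j)%N -> (i < j)%N.
Variable g : 'I_r -> subspace l.
Hypothesis hg : forall i : 'I_n.+1, i != ord0 -> g (c i) = (A ord0 :&: A i)%VS.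

Local Notation o := (@ord0 n).
Local Notation S := {set 'I_n.+1}.
Implicit Types (s t : S) (x y : 'I_n.+1) (T : {set 'I_r}) (v : Dcx n.+1) (u : Dcx r).

Definition cls s : {set 'I_r} := c @: (s :\ o).
Definition meetA s := vee fullv A s.
Definition meetG T := vee (A o) g T.
Definition redundant s x := meetA (s :\ x) == meetA s.

Lemma meetA_cls s : o \in s -> meetA s = meetG (cls s).
Proof.
move=> s0; apply: subv_ext => U; rewrite !subv_vee subvf /=.
apply/forall_inP/andP => [sUA | [sUo /forall_inP sUg]].
  have sUo := sUA o s0; split => //; apply/forall_inP => k; case/imsetP => i.
  by rewrite !inE => /andP [i0 si] ->; rewrite hg // subv_cap sUo sUA.
move=> i si; have [->|i0] := eqVneq i o; first by [].
have : c i \in cls s by apply: imset_f; rewrite !inE i0.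
by move/sUg; rewrite hg // subv_cap => /andP [].
Qed.

Lemma clsU1 x s : x != o -> cls (x |: s) = c x |: cls s.
Proof. by move=> x0; rewrite /cls setU1D1 // imsetU1. Qed.

Lemma clsD1 x s : x \in s -> x != o -> cls s = c x |: cls (s :\ x).
Proof. by move=> xs x0; rewrite -{1}(setD1K xs) clsU1. Qed.

Lemma redundant_cls s x : o \in s -> x != o ->
  redundant s x = (meetG (cls (s :\ x)) == meetG (cls s)).
Proof. by move=> s0 x0; rewrite /redundant !meetA_cls // !inE eq_sym x0. Qed.

Lemma redundant2 s x y :
  redundant s x && redundant (s :\ x) y = (meetA (s :\ x :\ y) == meetA s).
Proof.
rewrite /redundant; apply/andP/eqP => [[/eqP -> /eqP ->] // | e].
have sxs : (meetA s <= meetA (s :\ x))%VS by apply/veeS/subD1set.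
have sxys : (meetA (s :\ x) <= meetA (s :\ x :\ y))%VS by apply/veeS/subD1set.
have ex : meetA (s :\ x) = meetA s by apply/subv_anti; rewrite sxs -e sxys.
by rewrite ex e.
Qed.

(* The quotient D(A)/D(A') is represented on cochains supported on sets containing x_0;
   dq is its differential. *)
Definition dq_delta s : Dcx n.+1 := [ffun t => if o \in s then
  \sum_(x in s | (x != o) && redundant s x) (-1) ^+ pos x s * (t == s :\ x)%:R else 0].

Definition dq := linext dq_delta.

Lemma dq_delta_out s : o \notin s -> dq_delta s = 0.
Proof. by move=> s0; apply/ffunP=> t; rewrite !ffunE (negPf s0). Qed.

Lemma dq_deltaE s : o \in s -> dq_delta s =
  [ffun t => \sum_(x in s | (x != o) && redundant s x) (-1) ^+ pos x s * (t == s :\ x)%:R].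
Proof. by move=> s0; apply/ffunP=> t; rewrite !ffunE s0. Qed.

Lemma linext_dq_delta p (F : S -> Dcx p) s (t : {set 'I_p}) : o \in s ->
  linext F (dq_delta s) t =
  \sum_(x in s | (x != o) && redundant s x) (-1) ^+ pos x s * F (s :\ x) t.
Proof. by move=> s0; rewrite dq_deltaE // linext_sum_delta. Qed.

Lemma dq_dq_delta s : dq (dq_delta s) = 0.
Proof.
apply/ffunP => t; rewrite /dq [RHS]ffunE.
have [s0|s0] := boolP (o \in s); last by rewrite dq_delta_out // linext0 ffunE.
rewrite linext_dq_delta //.
pose a x y : rat :=
  if [&& x != o, y != o, y != x, redundant s x & redundant (s :\ x) y]
  then (-1) ^+ pos x s * (-1) ^+ pos y (s :\ x) * (t == s :\ x :\ y)%:R else 0.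
(* d^2 = 0 because each pair of removals is counted twice with opposite signs *)
transitivity (\sum_(x in s) \sum_(y in s) a x y); last first.
  apply: sum_antisym => x y xs ys; rewrite /a.
  have [->|yx] := eqVneq y x; first by rewrite !andbF oppr0.
  rewrite !redundant2 [s :\ y :\ x]setD1C /=.
  case: (x != o); case: (y != o); case: (_ == _); rewrite /= ?oppr0 //.
  rewrite (posD1 x ys) (posD1 y xs) !exprD.
  case: (ltngtP x y) => [_|_|eq_xy].
  - by rewrite /= expr1 expr0; ring.
  - by rewrite /= expr1 expr0; ring.
  - by move: yx; rewrite (val_inj eq_xy) eqxx.
rewrite big_mkcondr; apply: eq_bigr => x xs.
have [->|x0] := eqVneq x o; first by rewrite /a eqxx /= big1.
have [rx|nrx] /= := boolP (redundant s x); last first.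
  by symmetry; apply: big1 => y _; rewrite /a (negPf nrx) !andbF.
have s0' : o \in s :\ x by rewrite !inE eq_sym x0.
rewrite dq_deltaE // ffunE big_distrr /= big_mkcondr sum_setD1; apply: eq_bigr => y ys.
rewrite /a x0 rx /=; case: (y != x) => //=.
  by case: ifP; rewrite ?mulrA.
by rewrite andbF.
Qed.

Lemma dq_dq v : dq (dq v) = 0.
Proof.
rewrite /dq linext_comp; apply/ffunP=> t; rewrite !ffunE big1 // => s _.
by rewrite -/dq dq_dq_delta ffunE mulr0.
Qed.

Lemma dD_dq v t : o \in t -> dD fullv A v t = dq v t.
Proof.
move=> t0; rewrite /dD /dq /linext !ffunE; apply: eq_bigr => s _; congr (_ * _).
rewrite ffunE; have [s0|s0] := boolP (o \in s).
  rewrite [LHS]big_mkcond [RHS]big_mkcond; apply: eq_bigr => x _.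
  case xs: (x \in s) => //=; have [->|x0] /= := eqVneq x o.
    by rewrite (_ : (t == s :\ o) = false) //; apply: contraTF t0 => /eqP ->; rewrite setD11.
  by rewrite /redundant /meetA; case: (t == s :\ x); case: (_ == _); rewrite ?mulr1 ?mulr0.
rewrite big1 // => x /andP [xs /andP [/eqP ts _]].
by move: t0; rewrite ts !inE (negPf s0) andbF.
Qed.

Lemma dq_out v t : o \notin t -> dq v t = 0.
Proof.
move=> t0; rewrite /dq ffunE big1 // => s _; rewrite ffunE.
case: ifP => s0; rewrite ?mulr0 // big1 ?mulr0 // => x /andP [xs /andP [x0 _]].
rewrite (_ : (t == s :\ x) = false) ?mulr0 //.
by apply: contraNF t0 => /eqP ->; rewrite !inE eq_sym x0.
Qed.

Definition part (k : nat) s : S := [set x in s | (x != o) && (val (c x) == k)].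

Definition rep (k : nat) : 'I_n.+1 := odflt o [pick i | (i != o) && (val (c i) == k)].

Lemma rep_spec k i : i != o -> val (c i) = k -> rep k != o /\ val (c (rep k)) = k.
Proof.
move=> i0 ci; rewrite /rep; case: pickP => [j /andP [j0 /eqP cj] // | /(_ i)].
by rewrite i0 ci eqxx.
Qed.

Lemma rep_part k s : part k s != set0 -> rep k != o /\ val (c (rep k)) = k.
Proof. by case/set0Pn => i; rewrite inE => /and3P [_ i0 /eqP ci]; apply: rep_spec i0 ci. Qed.

Lemma rep_ord (k : 'I_r) : rep k != o /\ c (rep k) = k.
Proof.
have [i i0 ci] := hc_surj k; have [m0 cm] := rep_spec i0 (congr1 val ci).
by split => //; apply: val_inj.
Qed.

Lemma partD1 k s x : part k (s :\ x) = part k s :\ x.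
Proof. by apply/setP=> y; rewrite !inE; case: (y != x). Qed.

Lemma clsU1_rep k s : part k s != set0 -> cls (rep k |: s) = cls s.
Proof.
move=> Y0; have [m0 cm] := rep_part Y0; case/set0Pn: Y0 => y.
rewrite inE => /and3P [ys y0 /eqP cy]; rewrite clsU1 //; apply/setUidPr; rewrite sub1set.
by apply/imsetP; exists y; [rewrite !inE y0 | apply: val_inj; rewrite cm cy].
Qed.

Lemma class_interval x y (z : 'I_n.+1) : x != o -> y != o -> c x = c y ->
  (x < z < y)%N -> c z = c x.
Proof.
move=> x0 y0 cxy /andP [xz zy].
have z0 : z != o by apply: contraTneq xz => ->.
case: (ltngtP (c z) (c x)) => [lt_zx | lt_xz | /val_inj //].
  by have := hc_order z0 x0 lt_zx; rewrite ltnNge (ltnW xz).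
by rewrite cxy in lt_xz; have := hc_order y0 z0 lt_xz; rewrite ltnNge (ltnW zy).
Qed.

(* rep k and x are adjacent in rep k |: s, since class k is an interval. *)
Lemma sign_rep_adjacent k s x : part k s = [set x] -> rep k \notin s ->
  (-1) ^+ pos (rep k) (rep k |: s) * (-1) ^+ pos x (rep k |: s) = -1 :> rat.
Proof.
move=> Yx ms; have xY : x \in part k s by rewrite Yx set11.
have [m0 cm] : rep k != o /\ val (c (rep k)) = k.
  by apply: (@rep_part k s); apply/set0Pn; exists x.
move: xY; rewrite inE => /and3P [xs x0 /eqP cx].
have cxm : c x = c (rep k) by apply: val_inj; rewrite cx cm.
have mx : rep k != x by apply: contraNneq ms => ->.
apply: sign_adjacent; rewrite ?setU11 ?setU1r // => z /setU1P [-> | zs].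
  by rewrite ltnn andbF.
rewrite -negb_or; apply/negP => zb.
have z0 : z != o by case/orP: zb => /andP [lt _]; apply: contraTneq lt => ->.
have cz : c z = c x.
  case/orP: zb => zb; last exact: class_interval x0 m0 cxm zb.
  by rewrite cxm; apply: class_interval m0 x0 (esym cxm) zb.
have : z \in part k s by rewrite inE zs z0 cz cx /=.
by rewrite Yx inE => /eqP zx; move: zb; rewrite zx ltnn andbF.
Qed.

Definition hom_delta (k : nat) s : Dcx n.+1 := [ffun t =>
  if [&& o \in s, part k s != set0 & rep k \notin s]
  then (-1) ^+ pos (rep k) (rep k |: s) * (t == rep k |: s)%:R else 0].

Definition proj_delta (k : nat) s : Dcx n.+1 :=
  if (o \in s) && (part k s != set0) then
    (if #|part k s| == 1%N then delta (rep k |: (s :\: part k s)) else 0)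
  else delta s.

Definition hom k := linext (hom_delta k).
Definition proj k := linext (proj_delta k).

Lemma hom_delta_out k s :
  ~~ [&& o \in s, part k s != set0 & rep k \notin s] -> hom_delta k s = 0.
Proof. by move/negPf => h; apply/ffunP=> t; rewrite !ffunE h. Qed.

Lemma hom_deltaE k s : [&& o \in s, part k s != set0 & rep k \notin s] ->
  hom_delta k s = [ffun t => (-1) ^+ pos (rep k) (rep k |: s) * (t == rep k |: s)%:R].
Proof. by move=> h; apply/ffunP=> t; rewrite !ffunE h. Qed.

Lemma homotopy_delta_trivial k s : ~~ ((o \in s) && (part k s != set0)) ->
  delta s - proj_delta k s = dq (hom_delta k s) + hom k (dq_delta s).
Proof.
move=> triv; rewrite /proj_delta (negPf triv) subrr.
rewrite hom_delta_out; last by apply: contra triv => /and3P [-> ->].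
rewrite /dq /hom linext0 add0r; have [s0|s0] := boolP (o \in s); last first.
  by rewrite dq_delta_out // linext0.
move: triv; rewrite s0 negbK => /eqP Y0.
apply/ffunP => t; rewrite linext_dq_delta // ffunE big1 // => x _.
by rewrite hom_delta_out ?ffunE ?mulr0 // partD1 Y0 set0D eqxx andbF.
Qed.

Lemma partD1_neq0 k s x : x \in part k s -> #|part k s| != 1%N -> part k (s :\ x) != set0.
Proof.
move=> xY; apply: contra => /eqP Y0.
by rewrite -(setD1K xY) -partD1 Y0 setU0 cards1.
Qed.

Lemma homotopy_delta_rep_in k s : o \in s -> part k s != set0 -> rep k \in s ->
  delta s - proj_delta k s = dq (hom_delta k s) + hom k (dq_delta s).
Proof.
move=> s0 Y0 ms; have [m0 cm] := rep_part Y0.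
have mY : rep k \in part k s by rewrite inE ms m0 cm eqxx.
rewrite hom_delta_out ?ms ?andbF // /dq linext0 add0r /proj_delta s0 Y0 /=.
apply/ffunP => t; rewrite /hom linext_dq_delta //.
have others x : x != rep k -> hom_delta k (s :\ x) t = 0.
  move=> xm; have msx : rep k \in s :\ x by rewrite in_setD1 (eq_sym (rep k)) xm ms.
  by rewrite hom_delta_out ?ffunE // msx !andbF.
have [Y1|Y1] := eqVneq #|part k s| 1%N.
  have Ym : part k s = [set rep k].
    by move/eqP: Y1 => /cards1P [y Yy]; move: mY; rewrite Yy inE => /eqP ->.
  rewrite Ym setD1K // subrr ffunE big1 // => x _.
  have [->|xm] := eqVneq x (rep k); last by rewrite others // mulr0.
  by rewrite hom_delta_out ?ffunE ?mulr0 // partD1 Ym setDv eqxx andbF.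
have YD := partD1_neq0 mY Y1.
rewrite (bigD1 (rep k)) /=; last first.
  by rewrite ms m0 (redundant_cls s0 m0) -[in cls s](setD1K ms) clsU1_rep // eqxx.
rewrite big1 ?addr0; last by move=> x /andP [_ xm]; rewrite others // mulr0.
rewrite hom_deltaE; last by rewrite !inE eq_sym m0 s0 YD eqxx.
by rewrite !ffunE setD1K // mulrA signr_sqr mul1r subr0.
Qed.

Lemma part_single k s x : part k s != set0 -> part k (s :\ x) = set0 -> part k s = [set x].
Proof.
move=> Y0; rewrite partD1 => /eqP; rewrite setD_eq0 => sub.
apply/eqP; rewrite eqEsubset sub /=.
case/set0Pn: Y0 => y yY; have := subsetP sub y yY; rewrite inE => /eqP <-.
by rewrite sub1set.
Qed.

Lemma homotopy_term k s x t : o \in s -> part k s != set0 -> rep k \notin s -> x \in s ->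
  (-1) ^+ pos (rep k) (rep k |: s) *
    (if (x != o) && redundant (rep k |: s) x
     then (-1) ^+ pos x (rep k |: s) * (t == (rep k |: s) :\ x)%:R else 0)
  + (if (x != o) && redundant s x then (-1) ^+ pos x s * hom_delta k (s :\ x) t else 0)
  = if part k (s :\ x) == set0 then - (t == rep k |: (s :\ x))%:R else 0.
Proof.
move=> s0 Y0 ms xs; have [m0 cm] := rep_part Y0.
have s0' : o \in rep k |: s by rewrite !inE s0 orbT.
have [->|x0] := eqVneq x o.
  rewrite /= mulr0 addr0 ifN //; apply/negP => /eqP /(part_single Y0) Yo.
  have : o \in part k s by rewrite Yo set11.
  by rewrite inE eqxx andbF.
have mx : rep k != x by apply: contraNneq ms => ->.
rewrite /= setU1D1 //.
have xs' : o \in s :\ x by rewrite in_setD1 eq_sym x0 s0.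
have mxs : rep k \notin s :\ x by rewrite in_setD1 (negPf ms) andbF.
have [Yx|Yx] := eqVneq (part k (s :\ x)) set0.
  have Yxe := part_single Y0 Yx.
  have : x \in part k s by rewrite Yxe set11.
  rewrite inE => /and3P [_ _ /eqP cx]; have cxm : c x = c (rep k) by apply: val_inj; rewrite cx cm.
  rewrite hom_delta_out ?Yx ?eqxx ?andbF // ffunE mulr0 if_same addr0.
  rewrite (redundant_cls s0' x0) setU1D1 // !clsU1 // (clsD1 xs x0) cxm setUA setUid eqxx /=.
  by rewrite mulrA (sign_rep_adjacent Yxe ms) mulN1r.
rewrite hom_deltaE ?xs' ?Yx ?mxs // ffunE (redundant_cls s0' x0) (redundant_cls s0 x0).
rewrite setU1D1 // !clsU1_rep //; case: (_ == _); rewrite ?mulr0 ?addr0 //.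
by rewrite !mulrA (sign_swap ms xs) mulNr addNr.
Qed.

Lemma homotopy_delta_rep_out k s : o \in s -> part k s != set0 -> rep k \notin s ->
  delta s - proj_delta k s = dq (hom_delta k s) + hom k (dq_delta s).
Proof.
move=> s0 Y0 ms; have [m0 _] := rep_part Y0.
have s0' : o \in rep k |: s by rewrite !inE s0 orbT.
apply/ffunP => t; rewrite ffunBE ffunDE /hom linext_dq_delta //.
rewrite hom_deltaE ?s0 ?Y0 ?ms // /dq linext_scale_delta dq_deltaE //.
rewrite [X in _ = _ * X + _]ffunE big_mkcondr (big_setU1 _ ms) /=.
rewrite m0 /= setU1K // (redundant_cls s0' m0) clsU1_rep // (setU1K ms) eqxx.
rewrite mulrDr mulrA signr_sqr mul1r big_mkcondr mulr_sumr -addrA -big_split /=.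
rewrite (eq_bigr _ (fun x xs => homotopy_term t s0 Y0 ms xs)) /proj_delta s0 Y0 /=.
have single_x x : part k (s :\ x) == set0 -> part k s = [set x].
  by move/eqP; apply: part_single.
have [/eqP /cards1P [y Yy] | Y1] := eqVneq #|part k s| 1%N.
  have : y \in part k s by rewrite Yy set11.
  rewrite inE => /andP [ys _].
  rewrite ffunE (bigD1 y) //= partD1 Yy setDv eqxx big1 ?addr0 ?ffunE //.
  move=> x /andP [_ xy]; case: ifP => // /single_x Yx.
  by move: xy; rewrite -(set1_inj (etrans (esym Yx) Yy)) eqxx.
rewrite /= !ffunE subr0 big1 ?addr0 // => x _.
by case: ifP => // /single_x Yx; rewrite Yx cards1 eqxx in Y1.
Qed.

Lemma homotopy_delta k s :
  proj_delta k s = delta s - (dq (hom_delta k s) + hom k (dq_delta s)).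
Proof.
suff <- : delta s - proj_delta k s = dq (hom_delta k s) + hom k (dq_delta s).
  by rewrite opprB addrC subrK.
have [/andP [s0 Y0] | triv] := boolP ((o \in s) && (part k s != set0)).
  have [ms|ms] := boolP (rep k \in s).
    exact: homotopy_delta_rep_in.
  exact: homotopy_delta_rep_out.
exact: homotopy_delta_trivial.
Qed.

Lemma homotopy k v : proj k v = v - (dq (hom k v) + hom k (dq v)).
Proof.
rewrite /hom /dq !linext_comp -linext_addF -{2}(linext_deltaE v) -linext_subF.
by apply: eq_linext => s _; rewrite homotopy_delta.
Qed.

Lemma dq_proj k v : dq (proj k v) = proj k (dq v).
Proof.
rewrite !homotopy dq_dq /hom linext0 addr0 /dq !linextB linextD -/dq dq_dq.
by rewrite add0r.
Qed.

Definition phi_delta s : Dcx r := [ffun T =>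
  if (o \in s) && ~~ hasE A s then (-1) ^+ (#|s| - 1) * (T == cls s)%:R else 0].

Lemma phiE v : phi A c v = linext phi_delta v.
Proof. by apply/ffunP=> T; rewrite !ffunE; apply: eq_bigr => s _; rewrite ffunE. Qed.

Lemma hasE_card s : hasE A s = (#|cls s| != #|s :\ o|).
Proof.
apply/idP/idP.
  case/exists_inP => i si /exists_inP [j sj /and4P [i0 j0 ij]].
  rewrite -hc // => /eqP cij; apply/negP => /imset_injP inj.
  by move: ij; rewrite (inj i j) ?eqxx // !inE ?i0 ?j0.
apply: contraR => nE; apply/imset_injP => i j; rewrite !inE => /andP [i0 si] /andP [j0 sj] cij.
apply/eqP; apply: contraR nE => ij; apply/exists_inP; exists i => //; apply/exists_inP; exists j => //.
by rewrite i0 j0 ij /= -hc // cij.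
Qed.

Lemma card_cls s : o \in s -> ~~ hasE A s -> #|cls s| = (#|s| - 1)%N.
Proof.
by move=> s0; rewrite hasE_card negbK => /eqP ->; rewrite (cardsD1 o s) s0 add1n subn1.
Qed.

Lemma hasE_part k s : part k s != set0 -> #|part k s| != 1%N -> hasE A s.
Proof.
move=> Y0 Y1; case/set0Pn: (Y0) => y yY; case/set0Pn: (partD1_neq0 yY Y1) => z.
rewrite partD1 in_setD1 => /andP [zy zY].
move: yY zY; rewrite !inE => /and3P [ys y0 /eqP cy] /and3P [zs z0 /eqP cz].
apply/exists_inP; exists y => //; apply/exists_inP; exists z => //.
by rewrite y0 z0 eq_sym zy /= -hc //; apply/eqP/val_inj; rewrite cy cz.
Qed.

Lemma swap_rep k s y : o \in s -> part k s = [set y] ->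
  [/\ o \in rep k |: s :\ y, cls (rep k |: s :\ y) = cls s & #|rep k |: s :\ y| = #|s|].
Proof.
move=> s0 Yy; have : y \in part k s by rewrite Yy set11.
rewrite inE => /and3P [ys y0 /eqP cy]; have [m0 cm] := rep_spec y0 cy.
have [<-|ym] := eqVneq y (rep k); first by rewrite setD1K.
have ms : rep k \notin s.
  apply: contra ym => ms; have : rep k \in part k s by rewrite inE ms m0 cm eqxx.
  by rewrite Yy inE eq_sym.
have cym : c (rep k) = c y by apply: val_inj; rewrite cm cy.
split; first by rewrite in_setU1 in_setD1 (eq_sym o y) y0 s0 orbT.
  by rewrite clsU1 // cym -clsD1.
by rewrite cardsU1 in_setD1 (negPf ms) andbF /= (cardsD1 y s) ys.
Qed.

Lemma phi_delta_swap k s y : o \in s -> part k s = [set y] ->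
  phi_delta (rep k |: s :\ y) = phi_delta s.
Proof.
move=> s0 /(swap_rep s0) [s0' e1 e2].
have e3 : #|(rep k |: s :\ y) :\ o| = #|s :\ o|.
  move: (cardsD1 o (rep k |: s :\ y)) (cardsD1 o s); rewrite e2 s0' s0 => -> /eqP.
  by rewrite eqn_add2l => /eqP.
by apply/ffunP => T; rewrite !ffunE s0' s0 !hasE_card e1 e2 e3.
Qed.

Lemma phi_proj_delta k s : linext phi_delta (proj_delta k s) = phi_delta s.
Proof.
rewrite /proj_delta; case: ifP => [/andP [s0 Y0] | _]; last exact: linext_delta.
have [/eqP /cards1P [y Yy] | Y1] := eqVneq #|part k s| 1%N.
  by rewrite Yy linext_delta phi_delta_swap.
by rewrite linext0; apply/ffunP=> T; rewrite !ffunE (hasE_part Y0 Y1) andbF.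
Qed.

Definition rho (k : 'I_r) : 'I_n.+1 := rep k.

Lemma rho_neq0 k : rho k != o. Proof. by have [] := rep_ord k. Qed.
Lemma rhoK : cancel rho c. Proof. by move=> k; have [] := rep_ord k. Qed.
Lemma rho_inj : injective rho. Proof. exact: can_inj rhoK. Qed.

Lemma leq_rho (j k : 'I_r) : (rho j <= rho k)%N = (j <= k)%N.
Proof.
case: (ltngtP j k) => [lt_jk | lt_kj | /val_inj ->]; last by rewrite leqnn.
  by apply: ltnW; apply: hc_order; rewrite ?rho_neq0 // !rhoK.
by apply/negbTE; rewrite -ltnNge; apply: hc_order; rewrite ?rho_neq0 // !rhoK.
Qed.

Definition tau T : S := o |: rho @: T.

Lemma notin_rho T : o \notin rho @: T.
Proof. by apply/imsetP => [[k _ e]]; move: (rho_neq0 k); rewrite -e eqxx. Qed.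

Lemma tau_o T : o \in tau T. Proof. exact: setU11. Qed.

Lemma card_rho T : #|rho @: T| = #|T|.
Proof. exact/card_imset/rho_inj. Qed.

Lemma card_tau T : #|tau T| = #|T|.+1.
Proof. by rewrite /tau cardsU1 notin_rho card_rho. Qed.

Lemma cls_tau T : cls (tau T) = T.
Proof. by rewrite /cls /tau setU1K ?notin_rho // -imset_comp (eq_imset _ rhoK) imset_id. Qed.

Lemma tau_noE T : ~~ hasE A (tau T).
Proof. by rewrite hasE_card negbK cls_tau /tau setU1K ?notin_rho // card_rho. Qed.

Lemma tauD1 T k : k \in T -> tau T :\ rho k = tau (T :\ k).
Proof.
move=> kT; rewrite /tau setU1D1 1?eq_sym ?rho_neq0 //; congr (_ |: _).
apply/setP=> y; rewrite in_setD1.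
apply/andP/imsetP => [[yk /imsetP [j jT ey]] | [j]].
  exists j => //; rewrite in_setD1 jT andbT; apply: contraNneq yk => ejk.
  by rewrite ey ejk.
rewrite in_setD1 => /andP [jk jT] ->; split; last exact: imset_f.
by apply: contra jk => /eqP /rho_inj ->.
Qed.

Lemma pos_tau T k : k \in T -> pos (rho k) (tau T) = (pos k T).+1.
Proof.
move=> kT; rewrite /tau posU1 ?notin_rho //= addn1; congr _.+1.
rewrite /pos -(card_rho [set j in T | (j <= k)%N]).
suff -> : [set y in rho @: T | (y <= rho k)%N] = rho @: [set j in T | (j <= k)%N] by [].
apply/setP=> y; rewrite inE; apply/andP/imsetP => [[/imsetP [j jT ->] le] | [j]].
  by exists j => //; rewrite inE jT -leq_rho.
by rewrite inE => /andP [jT le] ->; rewrite imset_f // leq_rho.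
Qed.

Definition psi_delta T : Dcx n.+1 := [ffun s => (-1) ^+ #|T| * (s == tau T)%:R].
Definition psi := linext psi_delta.

Lemma phi_psi_delta T : linext phi_delta (psi_delta T) = delta T.
Proof.
apply/ffunP=> T'; rewrite linext_scale_delta !ffunE tau_o tau_noE card_tau cls_tau subn1 /=.
by rewrite mulrA signr_sqr mul1r.
Qed.

Lemma phi_psi u : linext phi_delta (psi u) = u.
Proof.
by rewrite /psi linext_comp -{2}(linext_deltaE u); apply: eq_linext => T _; apply: phi_psi_delta.
Qed.

Definition dG_delta T : Dcx r := [ffun T' =>
  \sum_(x in T | (T' == T :\ x) && (meetG (T :\ x) == meetG T)) (-1) ^+ pos x T].

Lemma dGE u : dD (A o) g u = linext dG_delta u.
Proof. by apply/ffunP=> T; rewrite !ffunE; apply: eq_bigr => s _; rewrite ffunE. Qed.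

Lemma dG_deltaE T : dG_delta T = [ffun T' =>
  \sum_(x in T | meetG (T :\ x) == meetG T) (-1) ^+ pos x T * (T' == T :\ x)%:R].
Proof.
apply/ffunP=> T'; rewrite !ffunE [RHS]big_mkcondr [LHS]big_mkcondr; apply: eq_bigr => x _.
by case: (T' == _); case: (_ == _); rewrite /= ?mulr1 ?mulr0.
Qed.

Lemma dq_psi_delta T : dq (psi_delta T) = psi (dG_delta T).
Proof.
apply/ffunP=> t; rewrite /dq linext_scale_delta (dq_deltaE (tau_o T)) ffunE dG_deltaE.
rewrite linext_sum_delta big_mkcondr /tau (big_setU1 _ (notin_rho T)) /= add0r.
rewrite big_imset /=; last by move=> i j _ _; apply: rho_inj.
rewrite [RHS]big_mkcondr mulr_sumr; apply: eq_bigr => k kT.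
rewrite rho_neq0 /= -/(tau T) (redundant_cls (tau_o T) (rho_neq0 k)) (tauD1 kT) !cls_tau.
case: (_ == _); rewrite ?mulr0 // (pos_tau kT) ffunE (cardsD1 k T) kT add1n.
by rewrite !exprS; ring.
Qed.

Lemma dq_psi u : dq (psi u) = psi (linext dG_delta u).
Proof. by rewrite /dq /psi !linext_comp; apply: eq_linext => T _; apply: dq_psi_delta. Qed.

Definition degA s : int := deg fullv A s.
Definition degG T : int := deg (A o) g T.
Definition shift : int := (2 * codimIn fullv (A o))%:Z - 1.

Lemma degA_D1 s x : x \in s -> meetA (s :\ x) = meetA s -> degA (s :\ x) = degA s + 1.
Proof.
move=> xs e; rewrite /degA /deg -!/(meetA _) e.
(* the two occurrences of #|s :\ x| differ by a coercion, hence the set before lia *)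
by move: (cardsD1 x s); rewrite xs /= => ->; set b := #|s :\ x|; lia.
Qed.

Definition dA_delta s : Dcx n.+1 := [ffun t =>
  \sum_(x in s | (t == s :\ x) && (meetA (s :\ x) == meetA s)) (-1) ^+ pos x s].

Lemma dAE v : dD fullv A v = linext dA_delta v.
Proof. by apply/ffunP=> t; rewrite !ffunE; apply: eq_bigr => s _; rewrite ffunE. Qed.

Lemma deg_dA_delta s t : dA_delta s t != 0 -> degA t = degA s + 1.
Proof.
by rewrite ffunE => /sum_neq0 [x /andP [xs /andP [/eqP -> /eqP e]] _]; apply: degA_D1.
Qed.

Lemma dim_meetG T : (\dim (meetG T) <= \dim (A o) <= \dim (@fullv _ 'rV[CC]_l))%N.
Proof.
rewrite !dimvS ?subvf //.
by move: (subvv (meetG T)); rewrite {2}/meetG subv_vee => /andP [].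
Qed.

Lemma deg_hom_delta k s t : hom_delta k s t != 0 -> degA t = degA s + (-1).
Proof.
rewrite ffunE; case: ifP => [/and3P [s0 Y0 ms] | _]; last by rewrite eqxx.
have [-> _|] := eqVneq t (rep k |: s); last by rewrite mulr0 eqxx.
have s0' : o \in rep k |: s by rewrite in_setU1 s0 orbT.
rewrite /degA /deg -!/(meetA _) !meetA_cls // clsU1_rep //.
by rewrite cardsU1 ms /=; lia.
Qed.

Lemma deg_proj_delta k s t : proj_delta k s t != 0 -> degA t = degA s + 0.
Proof.
rewrite addr0 /proj_delta; case: ifP => [/andP [s0 Y0] | _]; last first.
  by rewrite ffunE; case: (t =P s) => [->|].
have [/eqP /cards1P [y Yy] | _] := eqVneq #|part k s| 1%N; last by rewrite ffunE eqxx.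
rewrite ffunE; case: (t =P _) => [-> _ | //]; rewrite Yy.
have [s0' e1 e2] := swap_rep s0 Yy.
by rewrite /degA /deg -!/(meetA _) !meetA_cls // e1 e2.
Qed.

Lemma deg_phi_delta s T : phi_delta s T != 0 -> degG T = degA s + (- shift).
Proof.
rewrite ffunE; case: ifP => [/andP [s0 nE] | _]; last by rewrite eqxx.
case: (T =P cls s) => [-> _ | _]; last by rewrite mulr0 eqxx.
rewrite /degG /degA /deg /shift -/(meetA _) -/(meetG _) meetA_cls // card_cls //.
have := dim_meetG (cls s); have : (0 < #|s|)%N by apply/card_gt0P; exists o.
rewrite /codimIn; lia.
Qed.

Lemma deg_psi_delta T s : psi_delta T s != 0 -> degA s = degG T + shift.
Proof.
rewrite ffunE; case: (s =P tau T) => [-> _ | _]; last by rewrite mulr0 eqxx.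
rewrite /degG /degA /deg /shift -/(meetA _) -/(meetG _) meetA_cls ?tau_o // cls_tau card_tau.
have := dim_meetG T; rewrite /codimIn; lia.
Qed.

Definition normal_upto (k : nat) v := forall s, o \in s -> v s != 0 ->
  forall j, (j < k)%N -> part j s \subset [set rep j].

Lemma proj_delta_support k s t : o \in t -> proj_delta k s t != 0 ->
  [/\ o \in s, part k t \subset [set rep k] & forall j, j != k -> part j t \subset part j s].
Proof.
move=> t0; rewrite /proj_delta; case: ifP => [/andP [s0 Y0] | cond]; last first.
  rewrite ffunE; case: (t =P s) => [ts _ | //]; move: cond; rewrite -ts t0 /=.
  by move=> /negbFE /eqP ->; split=> [||j _]; rewrite ?sub0set ?subxx.
have [/eqP /cards1P [y Yy] | _] := eqVneq #|part k s| 1%N; last by rewrite ffunE eqxx.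
rewrite ffunE Yy; case: (t =P _) => [-> _ | //]; split=> //.
  apply/subsetP => x; rewrite !inE => /and3P [/orP [// | /andP [xy xs]] x0 cx].
  have : x \in part k s by rewrite inE xs x0 cx.
  by rewrite Yy inE (negPf xy).
have : y \in part k s by rewrite Yy set11.
rewrite inE => /and3P [_ y0 /eqP cy]; have [_ cm] := rep_spec y0 cy.
move=> j jk; apply/subsetP => x.
rewrite !inE => /and3P [/orP [/eqP xm | /andP [_ xs]] x0 cx]; last by rewrite xs x0 cx.
by move: cx; rewrite xm cm eq_sym (negPf jk).
Qed.

Lemma normal_upto_proj k v : normal_upto k v -> normal_upto k.+1 (proj k v).
Proof.
move=> nv t t0 /linext_support [s vs /(proj_delta_support t0) [s0 tk tj]] j.
rewrite ltnS leq_eqVlt => /orP [/eqP -> // | jk].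
by apply: subset_trans (tj j _) (nv s s0 vs j jk); rewrite neq_ltn jk.
Qed.

Lemma psi_phi_normal_delta s : o \in s -> (forall j, part j s \subset [set rep j]) ->
  psi (phi_delta s) = delta s.
Proof.
move=> s0 normal.
have rhoc i : i \in s :\ o -> rho (c i) = i.
  rewrite in_setD1 => /andP [i0 si].
  have : i \in part (c i) s by rewrite inE si i0 eqxx.
  by move/(subsetP (normal _)); rewrite inE => /eqP {2}->.
have nE : ~~ hasE A s.
  by rewrite hasE_card negbK; apply/imset_injP => i j si sj cij; rewrite -(rhoc i si) cij rhoc.
have ts : tau (cls s) = s.
  by rewrite /tau /cls -imset_comp (eq_in_imset rhoc) imset_id setD1K.
have -> : phi_delta s = [ffun T => (-1) ^+ (#|s| - 1) * (T == cls s)%:R].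
  by apply/ffunP => T; rewrite !ffunE s0 nE.
apply/ffunP=> t; rewrite linext_scale_delta ffunE ts ffunE card_cls //.
by rewrite mulrA signr_sqr mul1r.
Qed.

Lemma normal_upto_r v s : normal_upto r v -> o \in s -> v s != 0 ->
  forall j, part j s \subset [set rep j].
Proof.
move=> nv s0 vs j; have [jr|rj] := ltnP j r; first exact: nv.
apply/subsetP => x; rewrite inE => /and3P [_ _ /eqP cx].
by move: (ltn_ord (c x)); rewrite cx ltnNge rj.
Qed.

Lemma psi_phi_normal v t : normal_upto r v -> o \in t -> psi (linext phi_delta v) t = v t.
Proof.
move=> nv t0; rewrite /psi linext_comp.
rewrite (eq_linext (G := fun s => if o \in s then delta s else 0)); last first.
  move=> s vs; case: ifP => s0; first exact/psi_phi_normal_delta/(normal_upto_r nv).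
  by rewrite (_ : phi_delta s = 0) ?linext0 //; apply/ffunP => T; rewrite !ffunE s0.
rewrite -{2}(linext_deltaE v) !ffunE; apply: eq_bigr => s _.
case: ifP => s0; rewrite ?ffunE //; case: (t =P s) => [ts|]; rewrite ?mulr0 //.
by move: t0; rewrite ts s0.
Qed.

Fixpoint normalize (k : nat) v : Dcx n.+1 :=
  if k is k'.+1 then proj k' (normalize k' v) else v.

Lemma dq_normalize k v : dq (normalize k v) = normalize k (dq v).
Proof. by elim: k => //= k IH; rewrite dq_proj IH. Qed.

Lemma normalize0 k : normalize k 0 = 0.
Proof. by elim: k => //= k ->; apply: linext0. Qed.

Lemma phi_normalize k v : linext phi_delta (normalize k v) = linext phi_delta v.
Proof.
elim: k => //= k <-; rewrite /proj linext_comp.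
by apply: eq_linext => s _; apply: phi_proj_delta.
Qed.

Lemma normal_upto_normalize k v : normal_upto k (normalize k v).
Proof. by elim: k => [|k IH] /=; [move=> ? ? ? ? | apply: normal_upto_proj]. Qed.

Lemma homogeneous_normalize k d v :
  homogeneous degA d v -> homogeneous degA d (normalize k v).
Proof.
move=> hv; elim: k => //= k IH; rewrite -[d]addr0.
exact: homogeneous_linext (@deg_proj_delta k) IH.
Qed.

Lemma normalize_cohomologous k d v : dq v = 0 -> homogeneous degA d v ->
  exists2 w, homogeneous degA (d - 1) w & v = normalize k v + dq w.
Proof.
move=> cv hv; elim: k => [|k [w hw e]] /=.
  by exists 0; [apply: homogeneous0 | rewrite /dq linext0 addr0].
set u := normalize k v.
have cu : dq u = 0 by rewrite /u dq_normalize cv normalize0.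
exists (hom k u + w).
  apply: homogeneousD => //; rewrite /hom.
  by apply: (homogeneous_linext (@deg_hom_delta k)); apply: homogeneous_normalize.
by rewrite /dq linextD -/dq addrA homotopy cu /hom linext0 addr0 subrK.
Qed.

Lemma eq_dq v v' : (forall s, o \in s -> v s = v' s) -> dq v = dq v'.
Proof.
move=> eqo; apply/ffunP=> t; rewrite !ffunE; apply: eq_bigr => s _.
by have [s0|s0] := boolP (o \in s); [rewrite eqo | rewrite dq_delta_out // !ffunE !mulr0].
Qed.

Lemma eq_phi v v' : (forall s, o \in s -> v s = v' s) ->
  linext phi_delta v = linext phi_delta v'.
Proof.
move=> eqo; apply/ffunP=> T; rewrite !ffunE; apply: eq_bigr => s _.
by have [s0|s0] := boolP (o \in s); [rewrite eqo | rewrite !ffunE (negPf s0) !mulr0].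
Qed.

(* After normalization v agrees with psi (phi v) on sets containing x_0,
   and psi is a chain map with phi \o psi = id. *)
Lemma phi_dq v : linext phi_delta (dq v) = linext dG_delta (linext phi_delta v).
Proof.
rewrite -(phi_normalize r (dq v)) -dq_normalize -(phi_normalize r v).
rewrite (@eq_dq _ (psi (linext phi_delta (normalize r v)))); first by rewrite dq_psi phi_psi.
by move=> s s0; rewrite psi_phi_normal //; apply: normal_upto_normalize.
Qed.

Lemma phi_DA' v : inDA' v -> phi A c v = 0.
Proof.
move=> v'; rewrite phiE; apply/ffunP => T; rewrite !ffunE big1 // => s _.
by have [s0|s0] := boolP (o \in s); [rewrite v' // mul0r | rewrite ffunE (negPf s0) mulr0].
Qed.

Lemma phi_dD v : phi A c (dD fullv A v) = dD (A o) g (phi A c v).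
Proof. by rewrite !phiE dGE -phi_dq; apply: eq_phi => s s0; rewrite dD_dq. Qed.

Lemma homog_phi k v : homog fullv A k v -> homog (A o) g (k - shift) (phi A c v).
Proof. by rewrite phiE; apply: homogeneous_linext deg_phi_delta. Qed.

Lemma phibar_cohomology_injective k v : homog fullv A k v -> inDA' (dD fullv A v) ->
  (exists u, homog (A o) g (k - shift - 1) u /\ phi A c v = dD (A o) g u) ->
  exists w w', [/\ homog fullv A (k - 1) w, homog fullv A k w', inDA' w'
                 & v = dD fullv A w + w'].
Proof.
move=> hv dv [u [hu phiv]].
have cv : dq v = 0.
  apply/ffunP => t; have [t0|t0] := boolP (o \in t); last by rewrite dq_out // ffunE.
  by rewrite -dD_dq // dv // ffunE.
have [w hw e] := normalize_cohomologous r cv hv.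
have hpsi : homogeneous degA (k - 1) (psi u).
  have -> : k - 1 = k - shift - 1 + shift by rewrite addrAC subrK.
  exact: homogeneous_linext deg_psi_delta hu.
exists (psi u + w), (v - dD fullv A (psi u + w)); split.
- exact: homogeneousD.
- apply: homogeneousD => //; apply: homogeneousN; rewrite dAE -[k](subrK 1).
  exact: homogeneous_linext deg_dA_delta (homogeneousD hpsi hw).
- move=> s s0; rewrite ffunBE dD_dq // /dq linextD -/dq ffunDE dq_psi -dGE -phiv phiE.
  rewrite -(phi_normalize r v) psi_phi_normal //; last exact: normal_upto_normalize.
  by rewrite {1}e ffunDE subrr.
- by rewrite addrC subrK.
Qed.

Lemma phibar_cohomology_surjective k u :
  homog (A o) g (k - shift) u -> dD (A o) g u = 0 ->
  exists v u', [/\ homog fullv A k v, inDA' (dD fullv A v), homog (A o) g (k - shift - 1) u'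
                 & u = phi A c v + dD (A o) g u'].
Proof.
move=> hu du; exists (psi u), 0; split.
- by rewrite -[k](subrK shift); apply: homogeneous_linext deg_psi_delta hu.
- by move=> s s0; rewrite dD_dq // dq_psi -dGE du /psi linext0 ffunE.
- exact: homogeneous0.
- by rewrite phiE phi_psi dGE linext0 addr0.
Qed.

End Deletion.

Theorem proposition3p5
  (l n r : nat) (A : 'I_n.+1 -> subspace l)
  (* A = {x_0,...,x_n} is a complex subspace arrangement (x_i = A i) *)
  (hA : forall i j : 'I_n.+1, i != j -> ~~ (A i <= A j)%VS)
  (* classes A_1,...,A_r of ~ on A' = A \ {x_0}, numbered by c *)
  (c : 'I_n.+1 -> 'I_r)
  (hc : forall i j : 'I_n.+1, i != ord0 -> j != ord0 ->
          (c i == c j) = (A ord0 :&: A i == A ord0 :&: A j)%VS)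
  (hc_surj : forall k : 'I_r, exists2 i : 'I_n.+1, i != ord0 & c i = k)
  (* the order: elements of A_i precede those of A_j whenever i < j *)
  (hc_order : forall i j : 'I_n.+1, i != ord0 -> j != ord0 ->
          (c i < c j)%N -> (i < j)%N)
  (* ~A'' = {x_0 /\ y}, its k-th member being x_0 /\ y for y in A_k *)
  (g : 'I_r -> subspace l)
  (hg : forall i : 'I_n.+1, i != ord0 -> g (c i) = (A ord0 :&: A i)%VS) :
  let W := (fullv : subspace l) in
  let x0 := A ord0 in
  let shift : int := (2 * codimIn W x0)%:Z - 1 in
  (* phi vanishes on D(A'), so phibar is well defined *)
  (forall v : Dcx n.+1, inDA' v -> phi A c v = 0) /\
  (* phibar commutes with the differentials *)
  (forall v : Dcx n.+1, phi A c (dD W A v) = dD x0 g (phi A c v)) /\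
  (* phibar lowers degrees by 2 codim x0 - 1 *)
  (forall (k : int) (v : Dcx n.+1),
      homog W A k v -> homog x0 g (k - shift) (phi A c v)) /\
  (* injective in cohomology of degree k *)
  (forall (k : int) (v : Dcx n.+1),
      homog W A k v -> inDA' (dD W A v) ->
      (exists u : Dcx r, homog x0 g (k - shift - 1) u /\ phi A c v = dD x0 g u) ->
      exists w w' : Dcx n.+1,
        [/\ homog W A (k - 1) w, homog W A k w', inDA' w' & v = dD W A w + w']) /\
  (* surjective in cohomology of degree k *)
  (forall (k : int) (u : Dcx r),
      homog x0 g (k - shift) u -> dD x0 g u = 0 ->
      exists (v : Dcx n.+1) (u' : Dcx r),
        [/\ homog W A k v, inDA' (dD W A v), homog x0 g (k - shift - 1) u'
          & u = phi A c v + dD x0 g u']).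
Proof.
move=> W x0 shift; split; first exact: phi_DA'.
split; first exact: phi_dD.
split; first exact: homog_phi.
split; first exact: phibar_cohomology_injective.
exact: phibar_cohomology_surjective.
Qed.
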